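(* Let $\mathbf M$ be endowed with a model category structure and a monoidal structure $(\otimes,I)$, with terminal object $e$. Let $C$ be a comonoid in $\mathbf M$ such that $\mathbf{Comod}_C$ admits pullbacks, let $U_C:\mathbf{Comod}_C\to\mathbf M$ be the forgetful functor, and let $\mathsf C=U_C^{-1}(\mathsf{Cof}_{\mathbf M})$. Let $\mathsf Z\subset\mathsf{Fib}_{\mathbf M}\cap\mathsf{WE}_{\mathbf M}$ be such that every morphism $f$ of $\mathbf M$ factors as $f=qj$ with $j\in\mathsf{Cof}_{\mathbf M}$ and $q\in\mathsf{Post}_{\mathsf Z}$. Assume: (1) for every right $C$-comodule $(M,\rho)$, the coaction $\rho:M\to M\otimes C$ is a cofibration in $\mathbf M$; (2) $-\otimes C:\mathbf M\to\mathbf M$ preserves weak equivalences and cofibrations; (3) for every $i:M\to N$ in $\mathsf C$ and every morphism $g:M\to N'$ in $\mathbf{Comod}_C$, the induced morphism $(i,g):M\to N\times N'$ lies in $\mathsf C$; (4) $\mathsf{Post}_{\mathsf Z}\otimes C\subset\mathsf{Post}_{\mathsf Z\otimes C}$. Then every morphism $f$ of $\mathbf{Comod}_C$ factors as $f=pi$ with $i\in\mathsf C$ and $p\in\mathsf{Post}_{\mathsf Z\otimes C}$.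
   Context: A comonoid $(C,\Delta,\varepsilon)$ in a monoidal category is an object with coassociative, counital comultiplication $\Delta:C\to C\otimes C$ and counit $\varepsilon:C\to I$. A right $C$-comodule is an object $M$ with a coassociative counital coaction $\rho:M\to M\otimes C$; $\mathbf{Comod}_C$ is the category of right $C$-comodules and coaction-preserving maps; $X\otimes C$ is the cofree comodule with coaction $X\otimes\Delta$, and $-\otimes C$ is right adjoint to $U_C$. For a set $\mathsf Y$ of morphisms of $\mathbf M$, $\mathsf Y\otimes C=\{y\otimes C:y\in\mathsf Y\}$ as maps of cofree comodules. Postnikov towers: for a set $\mathsf S$ of morphisms in a category, an $\mathsf S$-Postnikov tower is a morphism $\lim_{\beta<\lambda}Y_\beta\to Y_0$ (when the limit exists) for a functor $Y:\lambda^{op}\to$ (the category), $\lambda$ an ordinal, such that each $Y_{\beta+1}\to Y_\beta$ ($\beta+1<\lambda$) is a pullback of some element of $\mathsf S$ along some morphism $Y_\beta\to X_\beta$, and $Y_\gamma=\lim_{\beta<\gamma}Y_\beta$ for limit $\gamma<\lambda$; $\mathsf{Post}_{\mathsf S}$ is the set of these. *)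

From Stdlib Require Import ProofIrrelevance.
Set Implicit Arguments.
Unset Strict Implicit.

Record Category := {
  Ob :> Type;
  Hom : Ob -> Ob -> Type;
  idm : forall A, Hom A A;
  comp : forall A B C, Hom B C -> Hom A B -> Hom A C;
  comp_id_l : forall A B (f : Hom A B), comp (idm B) f = f;
  comp_id_r : forall A B (f : Hom A B), comp f (idm A) = f;
  comp_assoc : forall A B C D (h : Hom C D) (g : Hom B C) (f : Hom A B),
      comp h (comp g f) = comp (comp h g) f }.
Arguments Hom {K} A B : rename.
Arguments idm {K} A : rename.
Arguments comp {K A B C} g f : rename.
Notation "g ∘ f" := (comp g f) (at level 40, left associativity).

Definition MorClass (K : Category) := forall A B : K, Hom A B -> Prop.

Definition IsTerminal (K : Category) (T : K) :=
  forall A : K, exists f : Hom A T, forall g : Hom A T, g = f.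
Definition IsInitial (K : Category) (T : K) :=
  forall A : K, exists f : Hom T A, forall g : Hom T A, g = f.

Definition IsPullback (K : Category) (A B C P : K) (f : Hom A C) (g : Hom B C)
  (p1 : Hom P A) (p2 : Hom P B) :=
  f ∘ p1 = g ∘ p2 /\
  forall (Q : K) (q1 : Hom Q A) (q2 : Hom Q B), f ∘ q1 = g ∘ q2 ->
    exists u : Hom Q P, p1 ∘ u = q1 /\ p2 ∘ u = q2 /\
      forall v : Hom Q P, p1 ∘ v = q1 -> p2 ∘ v = q2 -> v = u.

Definition IsPushout (K : Category) (A B C P : K) (f : Hom C A) (g : Hom C B)
  (i1 : Hom A P) (i2 : Hom B P) :=
  i1 ∘ f = i2 ∘ g /\
  forall (Q : K) (q1 : Hom A Q) (q2 : Hom B Q), q1 ∘ f = q2 ∘ g ->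
    exists u : Hom P Q, u ∘ i1 = q1 /\ u ∘ i2 = q2 /\
      forall v : Hom P Q, v ∘ i1 = q1 -> v ∘ i2 = q2 -> v = u.

Definition IsProduct (K : Category) (A B P : K) (p1 : Hom P A) (p2 : Hom P B) :=
  forall (Q : K) (q1 : Hom Q A) (q2 : Hom Q B),
    exists u : Hom Q P, p1 ∘ u = q1 /\ p2 ∘ u = q2 /\
      forall v : Hom Q P, p1 ∘ v = q1 -> p2 ∘ v = q2 -> v = u.

Definition HasPullbacks (K : Category) :=
  forall (A B C : K) (f : Hom A C) (g : Hom B C),
    exists (P : K) (p1 : Hom P A) (p2 : Hom P B), IsPullback f g p1 p2.
Definition HasPushouts (K : Category) :=
  forall (A B C : K) (f : Hom C A) (g : Hom C B),
    exists (P : K) (i1 : Hom A P) (i2 : Hom B P), IsPushout f g i1 i2.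

Definition IsRetract (K : Category) (X Y A B : K) (g : Hom X Y) (f : Hom A B) :=
  exists (i : Hom X A) (r : Hom A X) (i' : Hom Y B) (r' : Hom B Y),
    r ∘ i = idm X /\ r' ∘ i' = idm Y /\ f ∘ i = i' ∘ g /\ g ∘ r = r' ∘ f.

Definition HasLLP (K : Category) (A B X Y : K) (i : Hom A B) (p : Hom X Y) :=
  forall (u : Hom A X) (v : Hom B Y), p ∘ u = v ∘ i ->
    exists h : Hom B X, h ∘ i = u /\ p ∘ h = v.

Record ModelStructure (K : Category) := {
  Cof : MorClass K;
  Fib : MorClass K;
  WE  : MorClass K;
  ms_terminal : exists T : K, IsTerminal T;
  ms_initial : exists T : K, IsInitial T;
  ms_pullbacks : HasPullbacks K;
  ms_pushouts : HasPushouts K;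
  ms_2of3 : forall (A B C : K) (f : Hom A B) (g : Hom B C),
      (WE f -> WE g -> WE (g ∘ f)) /\ (WE f -> WE (g ∘ f) -> WE g) /\
      (WE g -> WE (g ∘ f) -> WE f);
  ms_retract_cof : forall (X Y A B : K) (g : Hom X Y) (f : Hom A B),
      IsRetract g f -> Cof f -> Cof g;
  ms_retract_fib : forall (X Y A B : K) (g : Hom X Y) (f : Hom A B),
      IsRetract g f -> Fib f -> Fib g;
  ms_retract_we : forall (X Y A B : K) (g : Hom X Y) (f : Hom A B),
      IsRetract g f -> WE f -> WE g;
  ms_lift_acyclic_cof : forall (A B X Y : K) (i : Hom A B) (p : Hom X Y),
      Cof i -> WE i -> Fib p -> HasLLP i p;
  ms_lift_acyclic_fib : forall (A B X Y : K) (i : Hom A B) (p : Hom X Y),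
      Cof i -> Fib p -> WE p -> HasLLP i p;
  ms_fact_acyclic_cof : forall (A B : K) (f : Hom A B),
      exists (W : K) (i : Hom A W) (p : Hom W B),
        Cof i /\ WE i /\ Fib p /\ f = p ∘ i;
  ms_fact_acyclic_fib : forall (A B : K) (f : Hom A B),
      exists (W : K) (i : Hom A W) (p : Hom W B),
        Cof i /\ Fib p /\ WE p /\ f = p ∘ i }.
Arguments Cof {K} m {A B} f.
Arguments Fib {K} m {A B} f.
Arguments WE {K} m {A B} f.

Record Monoidal (K : Category) := {
  tens : K -> K -> K;
  tensm : forall A A' B B' : K, Hom A A' -> Hom B B' -> Hom (tens A B) (tens A' B');
  tens_id : forall A B : K, tensm (idm A) (idm B) = idm (tens A B);
  tens_comp : forall (A A' A'' B B' B'' : K) (f : Hom A A') (f' : Hom A' A'')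
      (g : Hom B B') (g' : Hom B' B''),
      tensm (f' ∘ f) (g' ∘ g) = tensm f' g' ∘ tensm f g;
  munit : K;
  assoc : forall A B C : K, Hom (tens (tens A B) C) (tens A (tens B C));
  assoc_inv : forall A B C : K, Hom (tens A (tens B C)) (tens (tens A B) C);
  assoc_inv_l : forall A B C : K, assoc_inv A B C ∘ assoc A B C = idm _;
  assoc_inv_r : forall A B C : K, assoc A B C ∘ assoc_inv A B C = idm _;
  assoc_nat : forall (A A' B B' C C' : K) (f : Hom A A') (g : Hom B B') (h : Hom C C'),
      assoc A' B' C' ∘ tensm (tensm f g) h = tensm f (tensm g h) ∘ assoc A B C;
  lunit : forall A : K, Hom (tens munit A) A;
  lunit_inv : forall A : K, Hom A (tens munit A);
  lunit_inv_l : forall A : K, lunit_inv A ∘ lunit A = idm _;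
  lunit_inv_r : forall A : K, lunit A ∘ lunit_inv A = idm _;
  lunit_nat : forall (A A' : K) (f : Hom A A'),
      lunit A' ∘ tensm (idm munit) f = f ∘ lunit A;
  runit : forall A : K, Hom (tens A munit) A;
  runit_inv : forall A : K, Hom A (tens A munit);
  runit_inv_l : forall A : K, runit_inv A ∘ runit A = idm _;
  runit_inv_r : forall A : K, runit A ∘ runit_inv A = idm _;
  runit_nat : forall (A A' : K) (f : Hom A A'),
      runit A' ∘ tensm f (idm munit) = f ∘ runit A;
  pentagon : forall A B C D : K,
      tensm (idm A) (assoc B C D) ∘ assoc A (tens B C) D ∘ tensm (assoc A B C) (idm D)
      = assoc A B (tens C D) ∘ assoc (tens A B) C D;
  triangle : forall A B : K,
      tensm (idm A) (lunit B) ∘ assoc A munit B = tensm (runit A) (idm B);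
  (* The following three coherence identities are consequences of the axioms
     above (Kelly 1964); they are recorded for convenience only. *)
  runit_tens : forall A B : K,
      runit (tens A B) = tensm (idm A) (runit B) ∘ assoc A B munit;
  lunit_tens : forall A B : K,
      lunit (tens A B) ∘ assoc munit A B = tensm (lunit A) (idm B);
  lunit_runit_unit : lunit munit = runit munit }.
Arguments tens {K} T A B : rename.
Arguments tensm {K} T {A A' B B'} f g : rename.
Arguments munit {K} T : rename.
Arguments assoc {K} T A B C : rename.
Arguments assoc_inv {K} T A B C : rename.
Arguments lunit {K} T A : rename.
Arguments runit {K} T A : rename.

Record Comonoid (K : Category) (T : Monoidal K) := {
  cC : K;
  cDelta : Hom cC (tens T cC cC);
  cEps : Hom cC (munit T);
  c_coassoc : assoc T cC cC cC ∘ tensm T cDelta (idm cC) ∘ cDelta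
              = tensm T (idm cC) cDelta ∘ cDelta;
  c_counit_l : lunit T cC ∘ tensm T cEps (idm cC) ∘ cDelta = idm cC;
  c_counit_r : runit T cC ∘ tensm T (idm cC) cEps ∘ cDelta = idm cC }.
Arguments cC {K T} c : rename.
Arguments cDelta {K T} c : rename.
Arguments cEps {K T} c : rename.

Section Comod.
Variables (K : Category) (T : Monoidal K) (C : Comonoid T).

Definition IsCoaction (M : K) (rho : Hom M (tens T M (cC C))) : Prop :=
  assoc T M (cC C) (cC C) ∘ tensm T rho (idm (cC C)) ∘ rho
    = tensm T (idm M) (cDelta C) ∘ rho /\
  runit T M ∘ tensm T (idm M) (cEps C) ∘ rho = idm M.

Record Comodule := {
  cmObj : K;
  cmCoact : Hom cmObj (tens T cmObj (cC C));
  cmLaws : IsCoaction cmCoact }.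

Definition ComodHom (M N : Comodule) :=
  { f : Hom (cmObj M) (cmObj N) |
    cmCoact N ∘ f = tensm T f (idm (cC C)) ∘ cmCoact M }.

Lemma tens_comp_idr (A B D : K) (f : Hom A B) (g : Hom B D) :
  tensm T (g ∘ f) (idm (cC C)) = tensm T g (idm (cC C)) ∘ tensm T f (idm (cC C)).
Proof. rewrite <- tens_comp. rewrite comp_id_l. reflexivity. Qed.

Definition comod_id (M : Comodule) : ComodHom M M.
Proof.
  exists (idm (cmObj M)). rewrite tens_id, comp_id_l, comp_id_r. reflexivity.
Defined.

Definition comod_comp (M N P : Comodule) (g : ComodHom N P) (f : ComodHom M N) :
  ComodHom M P.
Proof.
  exists (proj1_sig g ∘ proj1_sig f).
  destruct g as [g hg], f as [f hf]; simpl.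
  rewrite comp_assoc, hg, <- comp_assoc, hf, comp_assoc, tens_comp_idr.
  reflexivity.
Defined.

Lemma comod_hom_eq (M N : Comodule) (f g : ComodHom M N) :
  proj1_sig f = proj1_sig g -> f = g.
Proof. destruct f, g; simpl; intros; apply subset_eq_compat; assumption. Qed.

Definition ComodCat : Category.
Proof.
  refine {| Ob := Comodule; Hom := ComodHom; idm := comod_id;
            comp := comod_comp |}.
  - intros; apply comod_hom_eq; simpl; apply comp_id_l.
  - intros; apply comod_hom_eq; simpl; apply comp_id_r.
  - intros; apply comod_hom_eq; simpl; apply comp_assoc.
Defined.

Definition UC (M N : ComodCat) (f : @Hom ComodCat M N) : Hom (cmObj M) (cmObj N) :=
  proj1_sig f.

Definition CofC (MS : ModelStructure K) : MorClass ComodCat :=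
  fun M N f => Cof MS (UC f).

Definition cofree_coact (X : K) :
  Hom (tens T X (cC C)) (tens T (tens T X (cC C)) (cC C)) :=
  assoc_inv T X (cC C) (cC C) ∘ tensm T (idm X) (cDelta C).

(* the cofree comodule X ⊗ C (the coaction laws are supplied as a
   proof argument; they hold in any monoidal category) *)
Definition cofree (X : K) (pX : IsCoaction (cofree_coact X)) : ComodCat :=
  {| cmObj := tens T X (cC C); cmCoact := cofree_coact X; cmLaws := pX |}.

Inductive tensC (Y : MorClass K) : MorClass ComodCat :=
| tensC_intro : forall (X X' : K) (y : Hom X X')
    (pX : IsCoaction (cofree_coact X)) (pX' : IsCoaction (cofree_coact X'))
    (h : cofree_coact X' ∘ tensm T y (idm (cC C))
         = tensm T (tensm T y (idm (cC C))) (idm (cC C)) ∘ cofree_coact X),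
    Y X X' y ->
    tensC Y (A := cofree pX) (B := cofree pX')
      (exist _ (tensm T y (idm (cC C))) h : @Hom ComodCat (cofree pX) (cofree pX')).

End Comod.
Arguments Comodule {K T} C.
Arguments IsCoaction {K T} C {M} rho.
Arguments ComodCat {K T} C.
Arguments cofree {K T C X} pX.
Arguments cofree_coact {K T} C X.
Arguments CofC {K T C} MS [A B] f.
Arguments tensC {K T C} Y [A B] f.

Record WellOrder := {
  WO :> Type;
  wlt : WO -> WO -> Prop;
  wlt_trans : forall a b c, wlt a b -> wlt b c -> wlt a c;
  wlt_irrefl : forall a, ~ wlt a a;
  wlt_total : forall a b, wlt a b \/ a = b \/ wlt b a;
  wlt_wf : well_founded wlt;
  wbot : WO;                       (* the element 0 (so λ > 0) *)
  wbot_least : forall a, a = wbot \/ wlt wbot a }.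
Arguments wlt {w} a b : rename.
Arguments wbot {w} : rename.

Definition wle (L : WellOrder) (a b : L) := wlt a b \/ a = b.
Definition IsSucc (L : WellOrder) (b b' : L) :=
  wlt b b' /\ forall c, ~ (wlt b c /\ wlt c b').
Definition IsLimitOrd (L : WellOrder) (g : L) :=
  g <> wbot /\ forall c, wlt c g -> exists d, wlt c d /\ wlt d g.

(* a functor  λ^op -> K *)
Record Tower (K : Category) (L : WellOrder) := {
  Yo : L -> K;
  Ym : forall b b' : L, wle b b' -> Hom (Yo b') (Yo b);
  Ym_id : forall b (h : wle b b), Ym h = idm (Yo b);
  Ym_comp : forall b b' b'' (h : wle b b') (h' : wle b' b'') (h'' : wle b b''),
      Ym h ∘ Ym h' = Ym h'' }.
Arguments Yo {K L} t b : rename.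
Arguments Ym {K L} t {b b'} h : rename.

Definition IsLimitOver (K : Category) (L : WellOrder) (Y : Tower K L)
  (P : L -> Prop) (V : K) (pi : forall b, P b -> Hom V (Yo Y b)) :=
  (forall b b' (h : wle b b') (pb : P b) (pb' : P b'), Ym Y h ∘ pi b' pb' = pi b pb) /\
  forall (W : K) (q : forall b, P b -> Hom W (Yo Y b)),
    (forall b b' (h : wle b b') (pb : P b) (pb' : P b'), Ym Y h ∘ q b' pb' = q b pb) ->
    exists u : Hom W V, (forall b pb, pi b pb ∘ u = q b pb) /\
      forall v : Hom W V, (forall b pb, pi b pb ∘ v = q b pb) -> v = u.

Arguments IsLimitOver {K L} Y P V pi.

Definition PostCond (K : Category) (S : MorClass K) (L : WellOrder) (Y : Tower K L) :=
  (forall (b b' : L) (h : wle b b'), IsSucc b b' ->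
     exists (W X : K) (s : Hom W X) (g : Hom (Yo Y b) X) (t : Hom (Yo Y b') W),
       S W X s /\ IsPullback s g t (Ym Y h)) /\
  (forall g : L, IsLimitOrd g ->
     IsLimitOver Y (fun b => wlt b g) (Yo Y g)
       (fun b (pb : wlt b g) => Ym Y (b := b) (b' := g) (or_introl pb))).

Inductive Post (K : Category) (S : MorClass K) : MorClass K :=
| post_intro : forall (L : WellOrder) (Y : Tower K L) (V : K)
    (pi : forall b : L, True -> Hom V (Yo Y b)),
    IsLimitOver Y (fun _ => True) V pi -> PostCond S Y ->
    Post S (pi wbot I).
Arguments Post {K} S [A B] f.

From Stdlib Require Import ClassicalEpsilon ProofIrrelevance.

(* Factor the map from M to the terminal object e in the model category as a
   cofibration j : M -> W followed by q in Post_Z.  By (4), q ⊗ C is in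
   Post_{Z ⊗ C}; its target e ⊗ C is terminal among comodules, so pulling
   q ⊗ C back along N -> e ⊗ C gives the projection p : N × (W ⊗ C) -> N, which
   is again in Post_{Z ⊗ C} because Postnikov towers are stable under pullback
   (pull back every stage of the tower).  The comodule map M -> W ⊗ C adjoint
   to j is (j ⊗ C) ∘ ρ, a cofibration by (1) and (2); so by (3) the map
   i = ((j ⊗ C) ∘ ρ, f) : M -> N × (W ⊗ C) lies in U_C^{-1}(Cof), and p ∘ i = f. *)

Ltac right_assoc := repeat rewrite <- comp_assoc.

Lemma comp_reassoc (K : Category) (A B D E : K) (a : Hom B D) (b : Hom A B)
  (c : Hom A D) : a ∘ b = c -> forall y : Hom E A, a ∘ (b ∘ y) = c ∘ y.
Proof. intros H y. rewrite comp_assoc, H. reflexivity. Qed.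
Arguments comp_reassoc {K A B D E a b c} _ {y}.

Section Pullbacks.
Context {K : Category}.

Lemma pullback_hom_ext {A B D P : K} {f : Hom A D} {g : Hom B D}
  {p1 : Hom P A} {p2 : Hom P B} (Hpb : IsPullback f g p1 p2) {Q : K} {v w : Hom Q P} :
  p1 ∘ v = p1 ∘ w -> p2 ∘ v = p2 ∘ w -> v = w.
Proof.
  destruct Hpb as [Hc Hu]. intros E1 E2.
  destruct (Hu Q (p1 ∘ w) (p2 ∘ w)) as [u [_ [_ Hun]]].
  { rewrite !comp_assoc, Hc. reflexivity. }
  rewrite (Hun v E1 E2). symmetry. apply Hun; reflexivity.
Qed.

Lemma pullback_paste {W X B P B' P' : K} {s : Hom W X} {g : Hom B X}
  {t : Hom P W} {q : Hom P B} {a : Hom B' B} {t' : Hom P' P} {q' : Hom P' B'} :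
  IsPullback s g t q -> IsPullback q a t' q' -> IsPullback s (g ∘ a) (t ∘ t') q'.
Proof.
  intros H1 H2. split.
  - rewrite comp_assoc, (proj1 H1). right_assoc. rewrite (proj1 H2). reflexivity.
  - intros Q q1 q2 E.
    destruct (proj2 H1 Q q1 (a ∘ q2)) as [z [Ez1 [Ez2 Ezu]]].
    { rewrite E. right_assoc. reflexivity. }
    destruct (proj2 H2 Q z q2) as [u [Eu1 [Eu2 Euu]]].
    { exact Ez2. }
    exists u. split; [rewrite <- comp_assoc, Eu1; exact Ez1|]. split; [exact Eu2|].
    intros v Hv1 Hv2. apply Euu; [|exact Hv2]. apply Ezu.
    + rewrite comp_assoc. exact Hv1.
    + rewrite comp_assoc, (proj1 H2), <- comp_assoc, Hv2. reflexivity.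
Qed.

Lemma pullback_cancel {N Y0 Yb Yb' P P' : K} {f : Hom N Y0} {k : Hom Yb Y0}
  {m : Hom Yb' Yb} {p1 : Hom P N} {p2 : Hom P Yb} {r1 : Hom P' N} {r2 : Hom P' Yb'}
  {u : Hom P' P} :
  IsPullback f k p1 p2 -> IsPullback f (k ∘ m) r1 r2 ->
  p1 ∘ u = r1 -> p2 ∘ u = m ∘ r2 -> IsPullback m p2 r2 u.
Proof.
  intros Hin Hout Eu1 Eu2. split; [symmetry; exact Eu2|].
  intros Q x y E.
  destruct (proj2 Hout Q (p1 ∘ y) x) as [w [Ew1 [Ew2 Ewu]]].
  { rewrite comp_assoc, (proj1 Hin). right_assoc. rewrite <- E. reflexivity. }
  exists w. split; [exact Ew2|]. split.
  - apply (pullback_hom_ext Hin).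
    + rewrite comp_assoc, Eu1. exact Ew1.
    + rewrite comp_assoc, Eu2, <- comp_assoc, Ew2. exact E.
  - intros v Hv1 Hv2. apply Ewu; [|exact Hv1].
    rewrite <- Eu1, <- comp_assoc, Hv2. reflexivity.
Qed.

Lemma pullback_over_terminal_is_product {Tm A B P : K} {f : Hom A Tm}
  {g : Hom B Tm} {p1 : Hom P A} {p2 : Hom P B} :
  IsTerminal Tm -> IsPullback f g p1 p2 -> IsProduct p2 p1.
Proof.
  intros HT Hp Q q1 q2.
  destruct (proj2 Hp Q q2 q1) as [u [E1 [E2 U]]].
  { destruct (HT Q) as [t Ht]. rewrite (Ht (f ∘ q2)), (Ht (g ∘ q1)). reflexivity. }
  exists u. split; [exact E2|split; [exact E1|]]. intros v Hv1 Hv2. exact (U v Hv2 Hv1).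
Qed.

End Pullbacks.

(* Cofibrations compose: k ∘ i is a retract of its factorization cofibration,
   by lifting twice against the acyclic fibration. *)
Lemma cof_comp (K : Category) (MS : ModelStructure K) (A B D : K)
  (i : Hom A B) (k : Hom B D) : Cof MS i -> Cof MS k -> Cof MS (k ∘ i).
Proof.
  intros Hi Hk.
  destruct (ms_fact_acyclic_fib MS (k ∘ i)) as [W [c [p [Hc [Hpf [Hpw E]]]]]].
  destruct (ms_lift_acyclic_fib Hi Hpf Hpw (eq_sym E)) as [h [Eh1 Eh2]].
  assert (E2 : p ∘ h = idm D ∘ k) by (rewrite comp_id_l; exact Eh2).
  destruct (ms_lift_acyclic_fib Hk Hpf Hpw E2) as [h' [Eh1' Eh2']].
  refine (ms_retract_cof _ Hc).
  exists (idm A), (idm A), h', p. split; [apply comp_id_l|]. split; [exact Eh2'|].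
  split.
  - rewrite comp_id_r, comp_assoc, Eh1', Eh1. reflexivity.
  - rewrite comp_id_r, E. reflexivity.
Qed.

Section PostnikovPullback.
Context {K : Category}.

Lemma wle_wbot (L : WellOrder) (b : L) : wle wbot b.
Proof. destruct (wbot_least b) as [e|l]; [right; symmetry; exact e|left; exact l]. Qed.
Arguments wle_wbot {L} b.

Lemma Ym_irrelevant {L : WellOrder} (Y : Tower K L) {b b'} (h h' : wle b b') :
  Ym Y h = Ym Y h'.
Proof. rewrite (proof_irrelevance _ h h'). reflexivity. Qed.

Section PulledBackTower.
Variables (L : WellOrder) (Y : Tower K L) (N : K) (g : Hom N (Yo Y wbot)).

Definition PullbackAlong (b : L) :=
  {P : K & {p1 : Hom P N & {p2 : Hom P (Yo Y b) |
     IsPullback g (Ym Y (wle_wbot b)) p1 p2}}}.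

Lemma pullback_along_id : IsPullback g (Ym Y (wle_wbot wbot)) (idm N) g.
Proof.
  rewrite Ym_id. split.
  - rewrite comp_id_l, comp_id_r. reflexivity.
  - intros Q q1 q2 E. rewrite comp_id_l in E. exists q1. rewrite comp_id_l.
    split; [reflexivity|split; [exact E|]].
    intros v Hv _. rewrite comp_id_l in Hv. exact Hv.
Qed.

Definition trivial_pullback : PullbackAlong wbot :=
  existT _ N (existT _ (idm N) (exist _ g pullback_along_id)).

Variables (S : MorClass K) (pullbacks : forall b, PullbackAlong b).
(* Stage 0 is N itself, so that the base map of the pulled-back tower is a map into N. *)
Hypothesis pullbacks_wbot : pullbacks wbot = trivial_pullback.

Definition Pb b := projT1 (pullbacks b).
Definition pa b : Hom (Pb b) N := projT1 (projT2 (pullbacks b)).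
Definition pc b : Hom (Pb b) (Yo Y b) := proj1_sig (projT2 (projT2 (pullbacks b))).

Lemma Pb_pullback b : IsPullback g (Ym Y (wle_wbot b)) (pa b) (pc b).
Proof. exact (proj2_sig (projT2 (projT2 (pullbacks b)))). Qed.

Lemma Pb_hom_ext b Q (v w : Hom Q (Pb b)) :
  pa b ∘ v = pa b ∘ w -> pc b ∘ v = pc b ∘ w -> v = w.
Proof. apply (pullback_hom_ext (Pb_pullback b)). Qed.

Lemma Pb_lift_ex {b Q} {q1 : Hom Q N} {q2 : Hom Q (Yo Y b)} :
  g ∘ q1 = Ym Y (wle_wbot b) ∘ q2 -> exists u, pa b ∘ u = q1 /\ pc b ∘ u = q2.
Proof.
  intros E. destruct (proj2 (Pb_pullback b) Q q1 q2 E) as [u [E1 [E2 _]]].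
  exists u. split; assumption.
Qed.

Definition Pb_lift {b Q} {q1 : Hom Q N} {q2 : Hom Q (Yo Y b)}
  (E : g ∘ q1 = Ym Y (wle_wbot b) ∘ q2) : Hom Q (Pb b) :=
  proj1_sig (constructive_indefinite_description _ (@Pb_lift_ex b Q q1 q2 E)).

Lemma pa_lift {b Q} {q1 : Hom Q N} {q2 : Hom Q (Yo Y b)}
  (E : g ∘ q1 = Ym Y (wle_wbot b) ∘ q2) : pa b ∘ Pb_lift E = q1.
Proof. exact (proj1 (proj2_sig (constructive_indefinite_description _ (Pb_lift_ex E)))). Qed.

Lemma pc_lift {b Q} {q1 : Hom Q N} {q2 : Hom Q (Yo Y b)}
  (E : g ∘ q1 = Ym Y (wle_wbot b) ∘ q2) : pc b ∘ Pb_lift E = q2.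
Proof. exact (proj2 (proj2_sig (constructive_indefinite_description _ (Pb_lift_ex E)))). Qed.

Lemma Ymap_compat {b b'} (h : wle b b') :
  g ∘ pa b' = Ym Y (wle_wbot b) ∘ (Ym Y h ∘ pc b').
Proof. rewrite (proj1 (Pb_pullback b')), comp_assoc, (Ym_comp _ _ _ (wle_wbot b')). reflexivity. Qed.

Definition Ymap b b' (h : wle b b') : Hom (Pb b') (Pb b) := Pb_lift (Ymap_compat h).
Arguments Ymap {b b'} h.

Lemma pa_Ymap b b' (h : wle b b') : pa b ∘ Ymap h = pa b'.
Proof. apply pa_lift. Qed.

Lemma pc_Ymap b b' (h : wle b b') : pc b ∘ Ymap h = Ym Y h ∘ pc b'.
Proof. apply pc_lift. Qed.

Lemma Ymap_id b (h : wle b b) : Ymap h = idm (Pb b).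
Proof.
  apply Pb_hom_ext.
  - rewrite pa_Ymap, comp_id_r. reflexivity.
  - rewrite pc_Ymap, Ym_id, comp_id_l, comp_id_r. reflexivity.
Qed.

Lemma Ymap_comp b b' b'' (h : wle b b') (h' : wle b' b'') (h'' : wle b b'') :
  Ymap h ∘ Ymap h' = Ymap h''.
Proof.
  apply Pb_hom_ext.
  - rewrite comp_assoc, !pa_Ymap. reflexivity.
  - rewrite comp_assoc, pc_Ymap, <- comp_assoc, pc_Ymap, comp_assoc,
      (Ym_comp _ _ _ h''), pc_Ymap. reflexivity.
Qed.

Definition pulled_back_tower : Tower K L :=
  {| Yo := Pb; Ym := @Ymap; Ym_id := Ymap_id; Ym_comp := Ymap_comp |}.

Lemma Ymap_pullback {b b'} (h : wle b b') : IsPullback (Ym Y h) (pc b) (pc b') (Ymap h).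
Proof.
  apply (pullback_cancel (Pb_pullback b) (r1 := pa b')); [|apply pa_Ymap|apply pc_Ymap].
  rewrite (Ym_comp _ _ _ (wle_wbot b')). apply Pb_pullback.
Qed.

(* Limits commute with pullback: the index set only needs to contain 0. *)
Lemma pulled_back_limit {Pr : L -> Prop} (pw : Pr wbot) {V : K}
  {pi : forall b, Pr b -> Hom V (Yo Y b)} (Hl : IsLimitOver Y Pr V pi)
  {V' : K} {aV : Hom V' N} {cV : Hom V' V} (Hp : IsPullback g (pi wbot pw) aV cV)
  {pi' : forall b, Pr b -> Hom V' (Pb b)}
  (H1 : forall b pb, pa b ∘ pi' b pb = aV) (H2 : forall b pb, pc b ∘ pi' b pb = pi b pb ∘ cV) :
  IsLimitOver pulled_back_tower Pr V' pi'.
Proof.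
  destruct Hl as [Hc Hu]. split.
  - intros b b' h pb pb'. simpl. apply Pb_hom_ext.
    + rewrite comp_assoc, pa_Ymap, !H1. reflexivity.
    + rewrite comp_assoc, pc_Ymap, <- comp_assoc, !H2, comp_assoc, (Hc b b' h pb pb').
      reflexivity.
  - intros W q Hq. simpl in Hq.
    set (x := pa wbot ∘ q wbot pw).
    assert (Hx : forall b pb, pa b ∘ q b pb = x).
    { intros b pb. unfold x. rewrite <- (Hq wbot b (wle_wbot b) pw pb), comp_assoc, pa_Ymap.
      reflexivity. }
    destruct (Hu W (fun b pb => pc b ∘ q b pb)) as [y [Hy Hyu]].
    { intros b b' h pb pb'.
      rewrite comp_assoc, <- pc_Ymap, <- comp_assoc, (Hq b b' h pb pb'). reflexivity. }
    destruct (proj2 Hp W x y) as [u [Hu1 [Hu2 Huu]]].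
    { unfold x. rewrite comp_assoc, (proj1 (Pb_pullback wbot)), Ym_id, comp_id_l, Hy.
      reflexivity. }
    exists u. split.
    + intros b pb. apply Pb_hom_ext.
      * rewrite comp_assoc, H1, Hu1, Hx. reflexivity.
      * rewrite comp_assoc, H2, <- comp_assoc, Hu2, Hy. reflexivity.
    + intros v Hv. apply (pullback_hom_ext Hp).
      * rewrite Hu1, <- (H1 wbot pw), <- comp_assoc, Hv. reflexivity.
      * rewrite Hu2. apply Hyu. intros b pb.
        rewrite comp_assoc, <- H2, <- comp_assoc, Hv. reflexivity.
Qed.

Lemma pulled_back_PostCond : PostCond S Y -> PostCond S pulled_back_tower.
Proof.
  intros [Hs Hlo]. split.
  - intros b b' h Hsc. destruct (Hs b b' h Hsc) as [W [X [s [k [t [HS Hsq]]]]]].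
    exists W, X, s, (k ∘ pc b), (t ∘ pc b'). split; [exact HS|].
    exact (pullback_paste Hsq (Ymap_pullback h)).
  - intros l Hl.
    assert (pw : wlt wbot l).
    { destruct (wbot_least l) as [e|lt]; [exfalso; exact (proj1 Hl e)|exact lt]. }
    apply (pulled_back_limit pw (Hlo l Hl) (aV := pa l) (cV := pc l)).
    + simpl. rewrite (Ym_irrelevant _ _ (wle_wbot l)). apply Pb_pullback.
    + intros b pb. apply pa_Ymap.
    + intros b pb. apply pc_Ymap.
Qed.

Lemma Post_pa_wbot {V'} {x : Hom V' (Pb wbot)} : Post S x -> Post S (pa wbot ∘ x).
Proof.
  unfold Pb, pa in *. revert x. rewrite pullbacks_wbot. intros x Hx. simpl.
  rewrite comp_id_l. exact Hx.
Qed.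

Lemma pulled_back_Post (V : K) (pi : forall b, True -> Hom V (Yo Y b))
  (Hl : IsLimitOver Y (fun _ => True) V pi) (HPC : PostCond S Y)
  (V' : K) (aV : Hom V' N) (cV : Hom V' V) :
  IsPullback g (pi wbot I) aV cV -> Post S aV.
Proof.
  intros Hp.
  assert (E : forall b, g ∘ aV = Ym Y (wle_wbot b) ∘ (pi b I ∘ cV)).
  { intro b. rewrite (proj1 Hp), comp_assoc, (proj1 Hl wbot b (wle_wbot b) I I). reflexivity. }
  set (pi' := fun b (_ : True) => Pb_lift (E b)).
  assert (HL' : IsLimitOver pulled_back_tower (fun _ => True) V' pi').
  { apply (pulled_back_limit I Hl Hp); intros b []; [apply pa_lift|apply pc_lift]. }
  rewrite <- (pa_lift (E wbot)).
  exact (Post_pa_wbot (post_intro HL' (pulled_back_PostCond HPC))).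
Qed.

End PulledBackTower.
Arguments PullbackAlong {L Y N} g b.
Arguments trivial_pullback {L Y N} g.
Arguments pulled_back_Post {L Y N g S pullbacks} pullbacks_wbot {V pi} Hl HPC {V' aV cV}.

Lemma pullback_family_exists (HPB : HasPullbacks K) {L : WellOrder} {Y : Tower K L}
  {N : K} (g : Hom N (Yo Y wbot)) :
  exists pbs : forall b, PullbackAlong g b, pbs wbot = trivial_pullback g.
Proof.
  assert (Hd : forall b, exists x : PullbackAlong g b,
     forall e : wbot = b, x = eq_rect wbot (PullbackAlong g) (trivial_pullback g) b e).
  { intro b. destruct (classic (wbot = b)) as [<-|ne].
    - exists (trivial_pullback g). intro e.
      rewrite (proof_irrelevance _ e eq_refl). reflexivity.
    - destruct (HPB _ _ _ g (Ym Y (wle_wbot b))) as [P [p1 [p2 H]]].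
      exists (existT _ P (existT _ p1 (exist _ p2 H))). intro e. contradiction. }
  exists (fun b => proj1_sig (constructive_indefinite_description _ (Hd b))).
  exact (proj2_sig (constructive_indefinite_description _ (Hd wbot)) eq_refl).
Qed.

Lemma post_pullback {S : MorClass K} (HPB : HasPullbacks K) {A B : K} {q : Hom A B}
  (Hq : Post S q) {N : K} (g : Hom N B) :
  exists P (p : Hom P N) (p2 : Hom P A), IsPullback g q p p2 /\ Post S p.
Proof.
  destruct Hq as [L Y V pi Hl HPC].
  destruct (HPB _ _ _ g (pi wbot I)) as [V' [aV [cV Hp]]].
  destruct (pullback_family_exists HPB g) as [pbs Hpbs].
  exists V', aV, cV. split; [exact Hp|].
  exact (pulled_back_Post Hpbs Hl HPC Hp).
Qed.

End PostnikovPullback.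

Section Cofree.
Context {K : Category} {T : Monoidal K}.
Notation t := (tensm T).

Lemma assoc_inv_nat (A A' B B' D D' : K) (f : Hom A A') (g : Hom B B') (h : Hom D D') :
  t (t f g) h ∘ assoc_inv T A B D = assoc_inv T A' B' D' ∘ t f (t g h).
Proof.
  rewrite <- (comp_id_l (t (t f g) h ∘ assoc_inv T A B D)), <- (assoc_inv_l T A' B' D').
  right_assoc. rewrite (comp_reassoc (assoc_nat T f g h)), <- comp_assoc, assoc_inv_r, comp_id_r.
  reflexivity.
Qed.
Arguments assoc_inv_nat {A A' B B' D D'} f g h.

Lemma tensm_idl_comp (X A B D : K) (f : Hom B D) (g : Hom A B) :
  t (idm X) (f ∘ g) = t (idm X) f ∘ t (idm X) g.
Proof. rewrite <- tens_comp, comp_id_l. reflexivity. Qed.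

Lemma tensm_idr_comp (X A B D : K) (f : Hom B D) (g : Hom A B) :
  t (f ∘ g) (idm X) = t f (idm X) ∘ t g (idm X).
Proof. rewrite <- tens_comp, comp_id_l. reflexivity. Qed.

Lemma tensm_idl_idr (A A' B B' : K) (f : Hom B B') (g : Hom A A') :
  t (idm A') f ∘ t g (idm B) = t g f.
Proof. rewrite <- tens_comp, comp_id_l, comp_id_r. reflexivity. Qed.

Lemma tensm_idr_idl (A A' B B' : K) (f : Hom B B') (g : Hom A A') :
  t g (idm B') ∘ t (idm A) f = t g f.
Proof. rewrite <- tens_comp, comp_id_l, comp_id_r. reflexivity. Qed.

Lemma pentagon_inv (A B C D : K) :
  assoc T (tens T A B) C D ∘ (t (assoc_inv T A B C) (idm D) ∘ assoc_inv T A (tens T B C) D)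
  = assoc_inv T A B (tens T C D) ∘ t (idm A) (assoc T B C D).
Proof.
  symmetry.
  transitivity (assoc_inv T A B (tens T C D) ∘ t (idm A) (assoc T B C D) ∘
     (assoc T A (tens T B C) D ∘ (t (assoc T A B C) (idm D) ∘
       (t (assoc_inv T A B C) (idm D) ∘ assoc_inv T A (tens T B C) D)))).
  - rewrite (comp_assoc (t (assoc T A B C) (idm D))), <- tensm_idr_comp, assoc_inv_r,
      tens_id, comp_id_l, assoc_inv_r, comp_id_r. reflexivity.
  - right_assoc.
    rewrite (comp_assoc (t (idm A) (assoc T B C D))), (comp_assoc (t (idm A) (assoc T B C D) ∘ _)).
    rewrite pentagon. right_assoc.
    rewrite (comp_assoc (assoc_inv T A B (tens T C D))), assoc_inv_l, comp_id_l.
    reflexivity.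
Qed.

Variable C : Comonoid T.
Notation c := (cC C).

Lemma cofree_coaction_laws (X : K) : IsCoaction C (cofree_coact C X).
Proof.
  unfold cofree_coact. split.
  - right_assoc. rewrite tensm_idr_comp. right_assoc.
    rewrite (comp_reassoc (assoc_inv_nat (idm X) (cDelta C) (idm c))).
    rewrite <- (tens_id T X c), (comp_reassoc (assoc_inv_nat (idm X) (idm c) (cDelta C))).
    right_assoc.
    rewrite <- (tensm_idl_comp X _ _ _ (t (idm c) (cDelta C)) (cDelta C)), <- (c_coassoc C),
      !tensm_idl_comp.
    right_assoc.
    rewrite (comp_assoc (t (assoc_inv T X c c) (idm c))), (comp_reassoc (pentagon_inv X c c c)).
    right_assoc. reflexivity.
  - rewrite runit_tens, <- (tens_id T X c). right_assoc.
    rewrite (comp_reassoc (assoc_inv_nat (idm X) (idm c) (cEps C))). right_assoc.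
    rewrite (comp_reassoc (assoc_inv_r T X c (munit T))), comp_id_l,
      <- (tensm_idl_comp X _ _ _ (t (idm c) (cEps C)) (cDelta C)), <- tensm_idl_comp,
      comp_assoc, (c_counit_r C).
    reflexivity.
Qed.

Lemma cofree_coact_nat {X X' : K} (q : Hom X X') :
  cofree_coact C X' ∘ t q (idm c) = t (t q (idm c)) (idm c) ∘ cofree_coact C X.
Proof.
  unfold cofree_coact. right_assoc.
  rewrite (comp_reassoc (assoc_inv_nat q (idm c) (idm c))), tens_id.
  right_assoc. rewrite tensm_idl_idr, tensm_idr_idl. reflexivity.
Qed.

Lemma cofree_transpose_comod {M : Comodule C} {X : K} (u : Hom (cmObj M) X)
  (pX : IsCoaction C (cofree_coact C X)) :
  cmCoact (cofree pX) ∘ (t u (idm c) ∘ cmCoact M)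
  = t (t u (idm c) ∘ cmCoact M) (idm c) ∘ cmCoact M.
Proof.
  simpl. rewrite comp_assoc, cofree_coact_nat, tensm_idr_comp. right_assoc. f_equal.
  destruct (cmLaws M) as [Hcoassoc _]. unfold cofree_coact. right_assoc.
  rewrite <- Hcoassoc. right_assoc.
  rewrite (comp_reassoc (assoc_inv_l T _ _ _)), comp_id_l. reflexivity.
Qed.

Definition cofree_transpose {M : Comodule C} {X : K} (pX : IsCoaction C (cofree_coact C X))
  (u : Hom (cmObj M) X) : @Hom (ComodCat C) M (cofree pX) :=
  exist _ (t u (idm c) ∘ cmCoact M) (cofree_transpose_comod u pX).

Lemma cofree_counit (X : K) :
  t (runit T X) (idm c) ∘ (t (t (idm X) (cEps C)) (idm c) ∘ cofree_coact C X)
  = idm (tens T X c).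
Proof.
  unfold cofree_coact.
  rewrite (comp_reassoc (assoc_inv_nat (idm X) (cEps C) (idm c))).
  assert (Htri : t (runit T X) (idm c) ∘ assoc_inv T X (munit T) c = t (idm X) (lunit T c)).
  { rewrite <- triangle, <- comp_assoc, assoc_inv_r, comp_id_r. reflexivity. }
  right_assoc. rewrite (comp_reassoc Htri).
  rewrite <- (tensm_idl_comp X _ _ _ (t (cEps C) (idm c)) (cDelta C)), <- tensm_idl_comp,
    comp_assoc, (c_counit_l C), tens_id.
  reflexivity.
Qed.

(* Uniqueness half of the adjunction U_C ⊣ - ⊗ C. *)
Lemma comod_hom_to_cofree {M : Comodule C} {X : K} {G : Hom (cmObj M) (tens T X c)} :
  cofree_coact C X ∘ G = t G (idm c) ∘ cmCoact M ->
  G = t (runit T X ∘ t (idm X) (cEps C) ∘ G) (idm c) ∘ cmCoact M.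
Proof.
  intros HG. rewrite !tensm_idr_comp. right_assoc. rewrite <- HG.
  transitivity (idm _ ∘ G); [rewrite comp_id_l; reflexivity|].
  rewrite <- (cofree_counit X). right_assoc. reflexivity.
Qed.

Lemma cofree_terminal {e : K} (he : IsTerminal e) (pe : IsCoaction C (cofree_coact C e)) :
  IsTerminal (K := ComodCat C) (cofree pe).
Proof.
  intros M. destruct (he (cmObj M)) as [m Hm].
  exists (cofree_transpose pe m).
  intros [G HG]. apply comod_hom_eq. simpl.
  rewrite <- (Hm (runit T e ∘ t (idm e) (cEps C) ∘ G)).
  exact (comod_hom_to_cofree HG).
Qed.

End Cofree.
Arguments cofree_transpose {K T C M X} pX u.

Theorem mainTheorem2 (K : Category) (T : Monoidal K) (MS : ModelStructure K)
  (e : K) (he : IsTerminal e)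
  (C : Comonoid T)
  (Hpb : HasPullbacks (ComodCat C))
  (Z : MorClass K)
  (HZ : forall (A B : K) (z : Hom A B), Z A B z -> Fib MS z /\ WE MS z)
  (Hfact : forall (A B : K) (f : Hom A B),
      exists (W : K) (j : Hom A W) (q : Hom W B), Cof MS j /\ Post Z q /\ f = q ∘ j)
  (H1 : forall M : Comodule C, Cof MS (cmCoact M))
  (H2 : forall (A B : K) (f : Hom A B),
      (WE MS f -> WE MS (tensm T f (idm (cC C)))) /\
      (Cof MS f -> Cof MS (tensm T f (idm (cC C)))))
  (H3 : forall (M N N' P : ComodCat C) (i : @Hom (ComodCat C) M N)
      (g : @Hom (ComodCat C) M N') (p1 : @Hom (ComodCat C) P N)
      (p2 : @Hom (ComodCat C) P N') (u : @Hom (ComodCat C) M P),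
      IsProduct p1 p2 -> p1 ∘ u = i -> p2 ∘ u = g ->
      CofC MS i -> CofC MS u)
  (H4 : forall (X X' : K) (q : Hom X X')
      (pX : IsCoaction C (cofree_coact C X)) (pX' : IsCoaction C (cofree_coact C X'))
      (h : cofree_coact C X' ∘ tensm T q (idm (cC C))
           = tensm T (tensm T q (idm (cC C))) (idm (cC C)) ∘ cofree_coact C X),
      Post Z q ->
      Post (tensC Z) (exist _ (tensm T q (idm (cC C))) h
                        : @Hom (ComodCat C) (cofree pX) (cofree pX'))) :
  forall (M N : ComodCat C) (f : @Hom (ComodCat C) M N),
    exists (P : ComodCat C) (i : @Hom (ComodCat C) M P) (p : @Hom (ComodCat C) P N),
      CofC MS i /\ Post (tensC Z) p /\ f = p ∘ i.
Proof.
  intros M N f.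
  destruct (he (cmObj M)) as [mM _].
  destruct (Hfact _ _ mM) as [W [j [q [Hj [Hq _]]]]].
  pose proof (cofree_coaction_laws C W) as pW.
  pose proof (cofree_coaction_laws C e) as pe.
  pose proof (H4 W e q pW pe (cofree_coact_nat C q) Hq) as HqC.
  destruct (he (cmObj N)) as [mN _].
  destruct (post_pullback Hpb HqC (cofree_transpose pe mN)) as [P [p [p2 [HP HpPost]]]].
  pose proof (pullback_over_terminal_is_product (cofree_terminal C he pe) HP) as Hprod.
  set (i := cofree_transpose pW j : @Hom (ComodCat C) M (cofree pW)).
  assert (Hi : CofC MS i) by (apply cof_comp; [apply H1|apply H2; exact Hj]).
  destruct (Hprod M i f) as [u [Eu1 [Eu2 _]]].
  exists P, u, p. split; [exact (H3 _ _ _ _ i f p2 p u Hprod Eu1 Eu2 Hi)|].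
  split; [exact HpPost|]. symmetry. exact Eu2.
Qed.
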